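(* Every pAND net is sub-sound.
   Context: Petri nets and markings. A Petri net is a triple $(P,T,F)$ with $P$ a finite set of places, $T$ a finite set of transitions, $P\cap T=\emptyset$, and $F\subseteq (P\times T)\cup(T\times P)$. For a node $x$, $\bullet x=\{y\mid (y,x)\in F\}$, $x\bullet=\{y\mid (x,y)\in F\}$. A marking is a multiset over $P$ (a function $P\to\mathbb N$); sets of places are identified with bags of multiplicity one, $+,-,\le$ are pointwise, and $k.m$ is the sum of $k$ copies of $m$. Transition $t$ is enabled at $m$ iff $\bullet t\le m$, firing gives $m-\bullet t+t\bullet$, and $m\xrightarrow{*}m'$ denotes reachability by a finite (possibly empty) firing sequence. A pWF net is $(P,T,F,I,O)$ with $(P,T,F)$ a Petri net, $I,O\subseteq P$ non-empty (input/output places), every node reachable by a directed path from some node of $I$, and some node of $O$ reachable from every node. AND nets. An AND net is an acyclic WF net $(P,T,F,I,O)$ such that for every place $p$: (1) either $p\in I$ and $|\bullet p|=0$, or $p\notin I$ and $|\bullet p|=1$; and (2) either $p\in O$ and $|p\bullet|=0$, or $p\notin O$ and $|p\bullet|=1$. A pAND net is an AND net that is a pWF net. Sub-soundness. A pWF net is sub-sound if for all integers $k\ge k'\ge 0$ and every marking $m'$: if $k.I\xrightarrow{*}m'+k'.O$ then $m'\xrightarrow{*}(k-k').O$. *)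

(* Petri nets with finite place type P and transition type T;
   the flow relation F is given by two boolean relations
   fpt : P -> T -> bool  ((p,t) \in F)  and  ftp : T -> P -> bool  ((t,p) \in F). *)
From mathcomp Require Import all_boot.
Set Implicit Arguments. Unset Strict Implicit. Unset Printing Implicit Defensive.

Section PetriNets.
Variables (P T : finType) (fpt : P -> T -> bool) (ftp : T -> P -> bool).

Definition node := (P + T)%type.

Definition flow : rel node := fun x y =>
  match x, y with
  | inl p, inr t => fpt p t
  | inr t, inl p => ftp t p
  | _, _ => false
  end.

Definition marking := {ffun P -> nat}.

Definition madd (m1 m2 : marking) : marking := [ffun p => m1 p + m2 p].
(* k.S for a set S of places (viewed as a bag of multiplicity one) *)
Definition mscale (k : nat) (S : {set P}) : marking := [ffun p => k * (p \in S)].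

Definition preT (t : T) : marking := [ffun p => nat_of_bool (fpt p t)].
Definition postT (t : T) : marking := [ffun p => nat_of_bool (ftp t p)].

Definition enabled (m : marking) (t : T) : Prop := forall p, preT t p <= m p.

Definition fire (m : marking) (t : T) : marking :=
  [ffun p => m p - preT t p + postT t p].

Inductive reach : marking -> marking -> Prop :=
  | reach_refl m : reach m m
  | reach_step m t m' : enabled m t -> reach (fire m t) m' -> reach m m'.

Definition preP (p : P) : {set T} := [set t | ftp t p].
Definition postP (p : P) : {set T} := [set t | fpt p t].

Definition pWF (I O : {set P}) : Prop :=
  [/\ I != set0, O != set0,
      (forall x : node, exists2 i, i \in I & connect flow (inl i) x) &
      (forall x : node, exists2 o, o \in O & connect flow x (inl o))].

Definition acyclic : Prop := forall x y : node, flow x y -> ~~ connect flow y x.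

Definition AND_net (I O : {set P}) : Prop :=
  [/\ acyclic,
      (forall p, ((p \in I) && (#|preP p| == 0)) || ((p \notin I) && (#|preP p| == 1))) &
      (forall p, ((p \in O) && (#|postP p| == 0)) || ((p \notin O) && (#|postP p| == 1)))].

Definition pAND_net (I O : {set P}) : Prop := AND_net I O /\ pWF I O.

Definition sub_sound (I O : {set P}) : Prop :=
  forall (k k' : nat) (m' : marking), k' <= k ->
    reach (mscale k I) (madd m' (mscale k' O)) ->
    reach m' (mscale (k - k') O).

End PetriNets.

From mathcomp Require Import all_boot zify.
Set Implicit Arguments. Unset Strict Implicit. Unset Printing Implicit Defensive.

(* The proof goes through the state equation of the net.  A firing sequence
   from m to m' yields a firing-count vector x with m' = m + C x, where C is
   the incidence matrix (lemma [reach_state_equation]).  Conversely, in an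
   ACYCLIC net every nonnegative solution y of m' = m + C y is realised by a
   firing sequence (lemma [acyclic_state_equation_reach]): a transition of the
   support of y with no predecessor in the support is enabled, and firing it
   decreases y.
   For a pAND net with k.I ->* m' + k'.O and firing counts x, every transition
   fires at most k times (lemma [AND_firing_bound]): each transition has an
   input place, whose unique producer fires at most k times by induction along
   the acyclic flow, or which is an input place holding k tokens.  Then k - x
   is a nonnegative solution of the state equation from m' to (k - k').O
   (lemma [AND_complement_state_equation]), since in an AND net every place
   has exactly one producer unless it is in I and exactly one consumer unless
   it is in O; acyclicity turns this solution into a firing sequence. *)

Lemma sum_mul_bump (A : finType) (c x : A -> nat) (a : A) :
  \sum_s c s * (x s + (s == a)) = \sum_s c s * x s + c a.
Proof.
under eq_bigr do rewrite mulnDr.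
rewrite big_split /=; congr (_ + _).
by rewrite (bigD1 a) //= eqxx muln1 big1 ?addn0 // => s /negbTE ->; rewrite muln0.
Qed.

Lemma sum_indicator_const (A : finType) (b : pred A) (k : nat) :
  \sum_s b s * k = k * #|[set s | b s]|.
Proof.
rewrite mulnC -sum_nat_const [RHS]big_mkcond /=.
by apply: eq_bigr => s _; rewrite inE; case: (b s); rewrite ?mul1n.
Qed.

Lemma sum_mul_complement (A : finType) (c x : A -> nat) (k : nat) :
  (forall s, x s <= k) ->
  \sum_s c s * (k - x s) + \sum_s c s * x s = \sum_s c s * k.
Proof.
by move=> x_le; rewrite -big_split; apply: eq_bigr => s _ /=; rewrite -mulnDr subnK.
Qed.

Section StateEquation.
Variables (P T : finType) (fpt : P -> T -> bool) (ftp : T -> P -> bool).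

Definition consumption (x : T -> nat) (p : P) : nat := \sum_t fpt p t * x t.
Definition production (x : T -> nat) (p : P) : nat := \sum_t ftp t p * x t.

(* The state equation m' = m + C x, written without subtraction. *)
Definition state_equation (m m' : marking P) (x : T -> nat) : Prop :=
  forall p, m' p + consumption x p = m p + production x p.

Definition bump (x : T -> nat) (t : T) : T -> nat := fun s => x s + (s == t).

Lemma state_equation_ext (m m' : marking P) (x y : T -> nat) :
  x =1 y -> state_equation m m' x -> state_equation m m' y.
Proof.
move=> x_y eq_x p; rewrite /consumption /production.
by under eq_bigr do rewrite -x_y; under [X in _ = _ + X]eq_bigr do rewrite -x_y.
Qed.

Lemma state_equation_fire (m m' : marking P) (x : T -> nat) (t : T) :
  enabled fpt m t ->
  state_equation m m' (bump x t) <-> state_equation (fire fpt ftp m t) m' x.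
Proof.
move=> t_en; split=> eq_p p; have := t_en p; move: (eq_p p);
  rewrite /consumption /production !sum_mul_bump /fire /preT /postT !ffunE;
  by case: (fpt p t); case: (ftp t p) => /=; lia.
Qed.

Lemma reach_state_equation (m m' : marking P) :
  reach fpt ftp m m' -> exists x, state_equation m m' x.
Proof.
elim=> {m m'} [m | m t m' t_en _ [x eq_x]].
  exists (fun _ => 0) => p.
  by rewrite /consumption /production !big1 // => s _; rewrite muln0.
by exists (bump x t); apply/state_equation_fire.
Qed.

End StateEquation.

Section AcyclicNets.
Variables (P T : finType) (fpt : P -> T -> bool) (ftp : T -> P -> bool).
Hypothesis acyclic_net : acyclic fpt ftp.

Definition ancestors (t : T) : {set node P T} :=
  [set v | connect (flow fpt ftp) v (inr t)].

Lemma ancestors_lt (s t : T) (p : P) :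
  ftp s p -> fpt p t -> #|ancestors s| < #|ancestors t|.
Proof.
move=> sp pt; have s_p : flow fpt ftp (inr s) (inl p) by [].
have p_t : connect (flow fpt ftp) (inl p) (inr t) by apply: connect1.
apply/proper_card/properP; split.
  apply/subsetP => v; rewrite !inE => v_s.
  exact: connect_trans v_s (connect_trans (connect1 s_p) p_t).
exists (inr t); first by rewrite inE connect0.
by rewrite inE; apply/negP => t_s; have := acyclic_net s_p; rewrite (connect_trans p_t t_s).
Qed.

Lemma acyclic_ind (Q : T -> Prop) :
  (forall t, (forall s p, ftp s p -> fpt p t -> Q s) -> Q t) -> forall t, Q t.
Proof.
move=> IH t; move: {2}#|ancestors t| (erefl #|ancestors t|) => n.
elim/ltn_ind: n t => n IHn t n_t; apply: IH => s p sp pt.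
by apply: (IHn _ _ s erefl); rewrite -n_t; exact: ancestors_lt sp pt.
Qed.

Lemma minimal_support (y : T -> nat) (t : T) : 0 < y t ->
  exists2 t0, 0 < y t0 & forall s p, ftp s p -> fpt p t0 -> y s = 0.
Proof.
elim/acyclic_ind: t => t IH y_t.
have [all0 | ] := boolP [forall s, forall p, ftp s p && fpt p t ==> (y s == 0)].
  exists t => // s p sp pt; apply/eqP.
  by move/forallP: all0 => /(_ s) /forallP /(_ p); rewrite sp pt.
rewrite negb_forall => /existsP [s]; rewrite negb_forall => /existsP [p].
by rewrite negb_imply -lt0n => /andP [/andP [sp pt] y_s]; exact: IH sp pt y_s.
Qed.

Lemma minimal_enabled (m m' : marking P) (y : T -> nat) (t : T) :
  state_equation fpt ftp m m' y -> 0 < y t ->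
  (forall s p, ftp s p -> fpt p t -> y s = 0) -> enabled fpt m t.
Proof.
move=> eq_y y_t pred0 p; rewrite /preT ffunE; case pt: (fpt p t) => //=.
have no_prod : production ftp y p = 0.
  by apply: big1 => s _; case sp: (ftp s p); rewrite ?(pred0 s p sp pt) ?muln0.
have : y t <= consumption fpt y p by rewrite /consumption (bigD1 t) //= pt mul1n leq_addr.
by have := eq_y p; rewrite no_prod; lia.
Qed.

Lemma acyclic_state_equation_reach (m m' : marking P) (y : T -> nat) :
  state_equation fpt ftp m m' y -> reach fpt ftp m m'.
Proof.
move: {2}(\sum_t y t) (erefl (\sum_t y t)) => n.
elim: n m y => [|n IH] m y sum_y eq_y.
  have y0 s : y s = 0 by apply/eqP; rewrite -leqn0 -sum_y (bigD1 s) //= leq_addr.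
  suff -> : m = m' by exact: reach_refl.
  apply/ffunP => p; have := eq_y p.
  by rewrite /consumption /production !big1 ?addn0 // => s _; rewrite y0 muln0.
have [t y_t] : exists t, 0 < y t.
  apply/existsP; apply: contraT; rewrite negb_exists => /forallP y0.
  by move: sum_y; rewrite big1 // => s _; apply/eqP; rewrite -leqn0 leqNgt y0.
have [t0 y_t0 pred0] := minimal_support y_t.
have t0_en := minimal_enabled eq_y y_t0 pred0.
pose y1 s := y s - (s == t0).
have y_bump : y =1 bump y1 t0.
  by move=> s; rewrite /bump /y1; case: eqP => [->|] /=; rewrite ?subnK ?subn0 ?addn0.
apply: (reach_step t0_en (IH _ y1 _ _)); last first.
  exact: (state_equation_fire ftp _ _ t0_en).1 (state_equation_ext y_bump eq_y).
rewrite (eq_bigr _ (fun s _ => y_bump s)) /bump in sum_y.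
have := sum_mul_bump (fun _ => 1) y1 t0.
by under eq_bigr do rewrite mul1n; under [X in _ = X + _]eq_bigr do rewrite mul1n; lia.
Qed.

End AcyclicNets.

(* In a pWF net every transition has an input place: the last edge of a flow
   path from an input place to t leaves a place. *)
Lemma pWF_input_place (P T : finType) (fpt : P -> T -> bool) (ftp : T -> P -> bool)
    (I O : {set P}) (t : T) :
  pWF fpt ftp I O -> exists p, fpt p t.
Proof.
case=> _ _ from_I _; have [i _ /connectP [q q_path q_last]] := from_I (inr t).
move: q_path q_last; case/lastP: q => [|q z] //=.
rewrite rcons_path last_rcons => /andP [_] + zt; subst z.
by case: (last (inl i) q) => // p pt; exists p.
Qed.

Section ANDNets.
Variables (P T : finType) (fpt : P -> T -> bool) (ftp : T -> P -> bool) (I O : {set P}).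
Hypothesis AND : AND_net fpt ftp I O.

Lemma AND_producers (p : P) : #|preP ftp p| = (p \notin I).
Proof. by have [_ /(_ p) + _] := AND; case: (p \in I); rewrite /= ?orbF => /eqP ->. Qed.

Lemma AND_consumers (p : P) : #|postP fpt p| = (p \notin O).
Proof. by have [_ _ /(_ p)] := AND; case: (p \in O); rewrite /= ?orbF => /eqP ->. Qed.

Lemma AND_production_bound (x : T -> nat) (k : nat) (p : P) :
  (forall s, ftp s p -> x s <= k) -> production ftp x p <= k * (p \notin I).
Proof.
move=> x_le; rewrite -AND_producers -sum_indicator_const.
by apply: leq_sum => s _; case sp: (ftp s p); rewrite ?mul1n ?x_le.
Qed.

(* In a pAND net, along a run from k.I every transition fires at most k
   times: its input place receives at most k tokens. *)
Lemma AND_firing_bound (k k' : nat) (m' : marking P) (x : T -> nat) :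
  pWF fpt ftp I O ->
  state_equation fpt ftp (mscale k I) (madd m' (mscale k' O)) x ->
  forall t, x t <= k.
Proof.
case: AND => acyclic_net _ _ wf eq_x.
elim/(acyclic_ind acyclic_net) => t IH; have [p pt] := pWF_input_place t wf.
have prod_le := AND_production_bound (fun s sp => IH s p sp pt).
have cons_ge : x t <= consumption fpt x p.
  by rewrite /consumption (bigD1 t) //= pt mul1n leq_addr.
by move: prod_le cons_ge (eq_x p); rewrite /madd /mscale !ffunE; case: (p \in I); lia.
Qed.

Lemma AND_complement_state_equation (k k' : nat) (m' : marking P) (x : T -> nat) :
  k' <= k -> (forall t, x t <= k) ->
  state_equation fpt ftp (mscale k I) (madd m' (mscale k' O)) x ->
  state_equation fpt ftp m' (mscale (k - k') O) (fun t => k - x t).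
Proof.
move=> k'_le x_le eq_x p.
have cons_sum := sum_mul_complement (fpt p) x_le.
have prod_sum := sum_mul_complement (ftp ^~ p) x_le.
rewrite !sum_indicator_const -[[set s | fpt p s]]/(postP fpt p) AND_consumers in cons_sum.
rewrite !sum_indicator_const -[[set s | ftp s p]]/(preP ftp p) AND_producers in prod_sum.
move: cons_sum prod_sum (eq_x p); rewrite /consumption /production /madd /mscale !ffunE.
by case: (p \in I); case: (p \in O) => /=; lia.
Qed.

End ANDNets.

Theorem mainTheorem18 (P T : finType) (fpt : P -> T -> bool) (ftp : T -> P -> bool)
    (I O : {set P}) :
  pAND_net fpt ftp I O -> sub_sound fpt ftp I O.
Proof.
move=> [AND wf] k k' m' k'_le run.
have [x eq_x] := reach_state_equation run.
have x_le := AND_firing_bound AND wf eq_x.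
have [acyclic_net _ _] := AND.
exact: (acyclic_state_equation_reach acyclic_net
  (AND_complement_state_equation AND k'_le x_le eq_x)).
Qed.
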